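(* Let $q\ge 2$, $n\ge 1$, $h\in F(n,q)$ and $G=\mathrm{IG}^*(h)$. Let $s\ge 1$, $c:[n]\to[s]$ and $u\in\Pi([n])$ be such that for every $i\in[n]$ at least one of the following holds: (1) for every neighbour $k$ of $i$ in $G$, $u(i)\le u(k)$; (2) for all $j,k\in[n]$ such that $c(j)=c(i)$, $u(i)<u(j)$ and $k$ is a neighbour of $j$ in $G$, we have $u(i)\le u(k)$. Then $\kappa(h,u)\le s$.
   Context: Let $q\ge 2$, $A=\{0,1,\dots,q-1\}$, $[n]=\{1,\dots,n\}$, and let $F(n,q)$ be the set of all maps $A^n\to A^n$. For $f\in F(m,q)$ and $i\in[m]$, $f_i$ is the $i$-th coordinate function and $f^i(x)=(x_1,\dots,x_{i-1},f_i(x),x_{i+1},\dots,x_m)$; for a word $w=(w_1,\dots,w_t)$ over $[m]$, $f^w=f^{w_t}\circ\cdots\circ f^{w_1}$. $\Pi([m])$ is the set of permutations of $[m]$ written as words $(w_1,\dots,w_m)$; $w(i)$ is the position of $i$ in $w$. $\mathrm{pr}_{[n]}:A^m\to A^n$ is the projection onto the first $n$ coordinates. For $m\ge n$, $(f,w)$ with $f\in F(m,q)$, $w\in\Pi([m])$ sequentializes $h\in F(n,q)$ if $\mathrm{pr}_{[n]}\circ f^w=h\circ\mathrm{pr}_{[n]}$. For $u\in\Pi([n])$, $w\in\Pi([m])$ respects $u$ if for all $i,j\in[n]$, $u(i)<u(j)$ implies $w(i)<w(j)$. $\kappa(h,u)$ is the smallest $k\ge0$ such that some $f\in F(n+k,q)$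 and $w\in\Pi([n+k])$ respecting $u$ sequentialize $h$. The interaction graph $\mathrm{IG}(h)$ is the directed graph on $[n]$ with an arc $(i,j)$ iff there exist $x,y\in A^n$ with $x_\ell=y_\ell$ for all $\ell\ne i$ and $h_j(x)\ne h_j(y)$; $\mathrm{IG}^*(h)$ is its undirected version ($\{i,j\}$ is an edge, possibly a loop, iff $(i,j)$ or $(j,i)$ is an arc). *)

(* Indices [n] = {1..n} are rendered 0-based as 'I_n,
   the alphabet A = {0..q-1} as 'I_q. *)
From mathcomp Require Import all_boot.
Set Implicit Arguments. Unset Strict Implicit. Unset Printing Implicit Defensive.

Definition config (n q : nat) := {ffun 'I_n -> 'I_q}.

Definition Fmap (n q : nat) := config n q -> config n q.

Definition upd (m q : nat) (f : Fmap m q) (i : 'I_m) (x : config m q) : config m q :=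
  [ffun j => if j == i then f x i else x j].

Definition seq_upd (m q : nat) (f : Fmap m q) (w : seq 'I_m) (x : config m q) : config m q :=
  foldl (fun y i => upd f i y) x w.

Definition is_perm_word (m : nat) (w : seq 'I_m) : bool := perm_eq w (enum 'I_m).

Definition wpos (m : nat) (w : seq 'I_m) (i : 'I_m) : nat := index i w.

Definition proj (n k q : nat) (x : config (n + k) q) : config n q :=
  [ffun i : 'I_n => x (lshift k i)].

Definition sequentializes (n k q : nat) (f : Fmap (n + k) q) (w : seq 'I_(n + k))
  (h : Fmap n q) : Prop :=
  forall x : config (n + k) q, proj (seq_upd f w x) = h (proj x).

Definition respects (n k : nat) (w : seq 'I_(n + k)) (u : seq 'I_n) : Prop :=
  forall i j : 'I_n, wpos u i < wpos u j -> wpos w (lshift k i) < wpos w (lshift k j).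

Definition seq_with (n q : nat) (h : Fmap n q) (u : seq 'I_n) (k : nat) : Prop :=
  exists (f : Fmap (n + k) q) (w : seq 'I_(n + k)),
    is_perm_word w /\ @respects n k w u /\ sequentializes f w h.

(* kappa(h,u) <= s, with kappa the least k such that seq_with h u k *)
Definition kappa_le (n q : nat) (h : Fmap n q) (u : seq 'I_n) (s : nat) : Prop :=
  exists k, k <= s /\ seq_with h u k.

Definition IG_arc (n q : nat) (h : Fmap n q) (i j : 'I_n) : Prop :=
  exists x y : config n q, (forall l, l != i -> x l = y l) /\ h x j <> h y j.

Definition IGs_edge (n q : nat) (h : Fmap n q) (i j : 'I_n) : Prop :=
  IG_arc h i j \/ IG_arc h j i.

From mathcomp Require Import all_boot ssralg zmodp.
From Stdlib Require Import ClassicalEpsilon.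

(* Use one auxiliary coordinate per colour and work in Z/qZ.  Vertices [i]
   satisfying (1) are updated directly to [h_i(x)]: none of their in-neighbours
   has been updated yet.  The auxiliary coordinate of colour [a], updated first,
   stores the sum of [h_k(x)] over the remaining vertices [k] of colour [a].
   Such a vertex [i] recovers [h_i(x)] by subtracting from that sum the values
   [h_k(x)] of the other vertices of its colour: those before [i] in [u] already
   hold [h_k(x)], and by (2) those after [i] can still compute [h_k(x)] from the
   current configuration, since none of their in-neighbours has moved yet. *)

Set Implicit Arguments. Unset Strict Implicit. Unset Printing Implicit Defensive.
Import GRing.Theory.

Lemma split_lshift m n (i : 'I_m) : split (lshift n i) = inl i.
Proof. exact: (unsplitK (inl i)). Qed.

Lemma split_rshift m n (i : 'I_n) : split (rshift m i) = inr i.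
Proof. exact: (unsplitK (inr i)). Qed.

Lemma IG_arc_local n q (h : Fmap n q) (x y : config n q) (j : 'I_n) :
  (forall l, IG_arc h l j -> x l = y l) -> h x j = h y j.
Proof.
move=> xy_in.
pose mix (L : seq 'I_n) : config n q := [ffun l => if l \in L then y l else x l].
have mix_cons l L : h (mix (l :: L)) j = h (mix L) j.
  case: (eqVneq (h (mix (l :: L)) j) (h (mix L) j)) => // neq.
  have /xy_in xy_l : IG_arc h l j.
    exists (mix (l :: L)), (mix L); split; last exact/eqP.
    by move=> l' /negbTE nl; rewrite !ffunE inE nl.
  congr (h _ j); apply/ffunP => l'; rewrite !ffunE inE.
  by case: eqP => [-> | _] //; rewrite xy_l if_same.
have mix_x L : h (mix L) j = h x j.
  elim: L => [|l L IH]; last by rewrite mix_cons.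
  by congr (h _ j); apply/ffunP => l; rewrite ffunE.
by rewrite -(mix_x (enum 'I_n)); congr (h _ j); apply/ffunP => l; rewrite ffunE mem_enum.
Qed.

Section Sweep.

Variables (n k q : nat) (f : Fmap (n + k) q).

Lemma seq_upd_rshift (g : config n q -> 'I_k -> 'I_q) (L : seq 'I_k)
    (x : config (n + k) q) :
  (forall y a, f y (rshift n a) = g (proj y) a) ->
  seq_upd f (map (@rshift n k) L) x =
  [ffun z => match split z with
             | inl _ => x z
             | inr a => if a \in L then g (proj x) a else x z end].
Proof.
move=> f_aux; elim/last_ind: L => [|L a IH].
  by apply/ffunP => z; rewrite ffunE; case: split.
rewrite map_rcons /seq_upd foldl_rcons -/(seq_upd _ _ _) IH.
set y := [ffun z => _].
have proj_y : proj y = proj x by apply/ffunP => i; rewrite !ffunE split_lshift.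
apply/ffunP => z; rewrite /upd !ffunE f_aux proj_y -[z]splitK.
case: (split z) => [i | a'] /=; first by rewrite eq_lrshift split_lshift.
by rewrite split_rshift (inj_eq (@rshift_inj _ _)) mem_rcons inE; case: eqP => [-> |].
Qed.

Definition sweep_state (x0 v : config n q) (e : 'I_k -> 'I_q) (p : seq 'I_n) :
    config (n + k) q :=
  [ffun z => match split z with
             | inl i => if i \in p then v i else x0 i
             | inr a => e a end].

Lemma seq_upd_lshift x0 v e (p : seq 'I_n) :
  (forall p' i r, p = p' ++ i :: r -> f (sweep_state x0 v e p') (lshift k i) = v i) ->
  seq_upd f (map (lshift k) p) (sweep_state x0 v e [::]) = sweep_state x0 v e p.
Proof.
elim/last_ind: p => [//|p i IH] f_step.
rewrite map_rcons /seq_upd foldl_rcons -/(seq_upd _ _ _) IH; last first.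
  by move=> p' i' r def_p; apply: (f_step p' i' (rcons r i)); rewrite def_p rcons_cat.
apply/ffunP => z; rewrite /upd !ffunE -[z]splitK.
case: (split z) => [j | a] /=; last by rewrite eq_sym eq_lrshift split_rshift.
rewrite (inj_eq (@lshift_inj _ _)) split_lshift mem_rcons inE.
by case: eqP => [-> | _] //; rewrite (f_step p i [::]) ?cats1.
Qed.

End Sweep.

Section Construction.

Variables (n s : nat) (u : seq 'I_n).

Definition sequential_word : seq 'I_(n + s) :=
  map (@rshift n s) (enum 'I_s) ++ map (lshift s) u.

Lemma lshift_notin_rshift (i : 'I_n) (L : seq 'I_s) :
  (lshift s i \in map (@rshift n s) L) = false.
Proof. by apply/mapP => -[a _ /eqP]; rewrite eq_lrshift. Qed.

Lemma sequential_word_perm : is_perm_word u -> is_perm_word sequential_word.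
Proof.
move=> u_perm; apply: uniq_perm; last 1 first.
- move=> z; rewrite mem_enum mem_cat -[z]splitK; case: (split z) => [i | a] /=.
  + by rewrite map_f ?orbT // (perm_mem u_perm) mem_enum.
  + by rewrite map_f ?mem_enum.
- rewrite cat_uniq (map_inj_uniq (@rshift_inj _ _)) (map_inj_uniq (@lshift_inj _ _)).
  rewrite enum_uniq (perm_uniq u_perm) enum_uniq andbT /=.
  by apply/hasPn => _ /mapP [i _ ->]; rewrite lshift_notin_rshift.
- exact: enum_uniq.
Qed.

Lemma sequential_word_respects : respects sequential_word u.
Proof.
move=> i j; rewrite /wpos !index_cat !lshift_notin_rshift.
by rewrite !index_map ?size_map ?size_enum_ord ?ltn_add2l //; exact: lshift_inj.
Qed.

Variables (q : nat) (h : Fmap n q.+1) (c : 'I_n -> 'I_s) (direct : 'I_n -> bool).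

Definition colour_class (a : 'I_s) (k : 'I_n) : bool := (c k == a) && ~~ direct k.

Definition colour_sum (x : config n q.+1) (a : 'I_s) : 'I_q.+1 :=
  (\sum_(k | colour_class a k) h x k)%R.

Definition sequential_map : Fmap (n + s) q.+1 := fun y =>
  [ffun z => match split z with
   | inl i => if direct i then h (proj y) i
              else (y (rshift n (c i)) - \sum_(k | colour_class (c i) k && (k != i))
                      (if (index k u < index i u)%N then y (lshift s k) else h (proj y) k))%R
   | inr a => colour_sum (proj y) a end].

Hypothesis u_perm : is_perm_word u.
(* Conditions (1) and (2), which are only needed for in-neighbours. *)
Hypothesis direct_ok :
  forall i l, direct i -> IG_arc h l i -> index i u <= index l u.
Hypothesis colour_ok : forall i k l, ~~ direct i -> c k = c i ->
  index i u < index k u -> IG_arc h l k -> index i u <= index l u.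

Lemma sequential_map_step x0 p i r : u = p ++ i :: r ->
  sequential_map (sweep_state x0 (h x0) (colour_sum x0) p) (lshift s i) = h x0 i.
Proof.
move=> def_u.
have mem_u k : k \in u by rewrite (perm_mem u_perm) mem_enum.
have i_notin_p : i \notin p.
  move: (perm_uniq u_perm); rewrite enum_uniq def_u uniq_catC /= mem_cat negb_or.
  by case/andP => /andP[].
have index_i : index i u = size p by rewrite def_u index_pivot.
have mem_p k : (k \in p) = (index k u < index i u).
  rewrite index_i def_u index_cat; case: ifP => [kp | _]; first by rewrite index_mem kp.
  by rewrite ltnNge leq_addr.
set y := sweep_state _ _ _ _.
have proj_y l : index i u <= index l u -> proj y l = x0 l.
  by rewrite !ffunE split_lshift mem_p ltnNge => ->.
rewrite ffunE split_lshift.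
case: ifP => [di | /negbT ndi].
  by apply: IG_arc_local => l /(direct_ok di); apply: proj_y.
rewrite ffunE split_rshift /colour_sum (bigD1 i) /=; last by rewrite /colour_class eqxx ndi.
rewrite -[RHS](addrK (\sum_(k | colour_class (c i) k && (k != i)) h x0 k)%R).
congr (_ - _)%R; apply: eq_bigr => k /andP[/andP[/eqP ck _] nki].
case: ltnP => [lt_ki | le_ik].
  by rewrite ffunE split_lshift mem_p lt_ki.
have lt_ik : index i u < index k u.
  rewrite ltn_neqAle le_ik andbT; apply: contra nki => /eqP eq_ik.
  by apply/eqP/(index_inj i (mem_u k) (mem_u i)).
by apply: IG_arc_local => l /(colour_ok ndi ck lt_ik); apply: proj_y.
Qed.

Lemma sequential_map_sequentializes : sequentializes sequential_map sequential_word h.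
Proof.
move=> x; set x0 := proj x.
have aux_phase : seq_upd sequential_map (map (@rshift n s) (enum 'I_s)) x =
    sweep_state x0 (h x0) (colour_sum x0) [::].
  rewrite (seq_upd_rshift _ (g := colour_sum)) => [|y a]; last by rewrite ffunE split_rshift.
  apply/ffunP => z; rewrite !ffunE -[z]splitK; case: (split z) => [i | a] /=.
    by rewrite split_lshift ffunE.
  by rewrite split_rshift mem_enum.
rewrite /seq_upd foldl_cat -!/(seq_upd _ _ _) aux_phase.
rewrite seq_upd_lshift; last exact: sequential_map_step.
by apply/ffunP => i; rewrite !ffunE split_lshift (perm_mem u_perm) mem_enum.
Qed.

End Construction.

Theorem mainTheorem14 (q n : nat) (hq : 2 <= q) (hn : 1 <= n) (h : Fmap n q)
  (s : nat) (hs : 1 <= s) (c : 'I_n -> 'I_s) (u : seq 'I_n) (hu : is_perm_word u) :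
  (forall i : 'I_n,
     (forall k : 'I_n, IGs_edge h i k -> wpos u i <= wpos u k) \/
     (forall j k : 'I_n, c j = c i -> wpos u i < wpos u j -> IGs_edge h j k ->
        wpos u i <= wpos u k)) ->
  kappa_le h u s.
Proof.
(* Writing the alphabet as 'I_q.+1 gives it the group structure of Z/(q+1)Z. *)
case: q hq h => [//|q] _ h cond.
pose direct i := if excluded_middle_informative
  (forall k, IGs_edge h i k -> wpos u i <= wpos u k) then true else false.
have direct_ok i l : direct i -> IG_arc h l i -> index i u <= index l u.
  by rewrite /direct; case: excluded_middle_informative => // cond1 _ arc; apply: cond1; right.
have colour_ok i k l : ~~ direct i -> c k = c i -> index i u < index k u ->
    IG_arc h l k -> index i u <= index l u.
  rewrite /direct; case: excluded_middle_informative => // not_cond1 _ ck lt_ik arc.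
  by case: (cond i) => // cond2; apply: cond2 ck lt_ik _; right.
exists s; split => //.
exists (sequential_map u h c direct), (sequential_word s u).
split; [exact: sequential_word_perm | split].
- exact: sequential_word_respects.
- exact: sequential_map_sequentializes.
Qed.
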